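(* Let $h$ be a $K$-strongly convex distance-generating function on $\mathcal{X}$ and assume $\nabla h$ is $L_h$-Lipschitz. Then for every $y\in\mathcal{V}^*$, $$\|P_{x_1}(y)-P_{x_2}(y)\|\le\frac{L_h}{K}\|x_1-x_2\|\qquad\text{for all } x_1,x_2\in\operatorname{dom}\partial h.$$
   Context: $\mathcal{X}$ is a compact convex subset of a finite-dimensional normed space $\mathcal{V}$ with norm $\|\cdot\|$ and dual space $\mathcal{V}^*$ with dual norm $\|\cdot\|_*$. $h$ is differentiable on a domain containing $\mathcal{X}$, $K$-strongly convex in the sense $\langle\nabla h(x)-\nabla h(x'),x-x'\rangle\ge K\|x-x'\|^2$ for all $x,x'\in\mathcal{X}$, and $L_h$-Lipschitz gradient means $\|\nabla h(x)-\nabla h(x')\|_*\le L_h\|x-x'\|$. $\operatorname{dom}\partial h$ denotes the set of points of $\mathcal{X}$ where $h$ has nonempty subdifferential. The Bregman divergence is $D(p,x)=h(p)-h(x)-\langle\nabla h(x),p-x\rangle$ and the prox-mapping is $P_x(y)=\arg\min_{x'\in\mathcal{X}}\{\langle y,x-x'\rangle+D(x',x)\}$. *)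

From HB Require Import structures.
From mathcomp Require Import all_boot all_order all_algebra.
From mathcomp Require Import all_classical all_reals all_analysis.
Set Implicit Arguments. Unset Strict Implicit. Unset Printing Implicit Defensive.
Import Order.TTheory GRing.Theory Num.Theory.
Import numFieldNormedType.Exports.
Local Open Scope classical_set_scope.
Local Open Scope ring_scope.

(* The finite-dimensional space V is modelled as 'rV[R]_n (every
   finite-dimensional real normed space is linearly isomorphic to some
   (R^n, N)), equipped with an ARBITRARY norm N.  Its dual V^* is modelled as
   the space of real-valued (linear) functionals on V; an element y of V^* is
   given by a row vector, acting through the canonical pairing. *)

Definition is_norm (R : realType) (n : nat) (N : 'rV[R]_n -> R) : Prop :=
  [/\ forall x y, N (x + y) <= N x + N y,
      forall (a : R) x, N (a *: x) = `|a| * N x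
    & forall x, N x = 0 -> x = 0].

Definition pairing (R : realType) (n : nat) (y x : 'rV[R]_n) : R :=
  \sum_(i < n) y ord0 i * x ord0 i.

Definition dualnorm (R : realType) (n : nat) (N : 'rV[R]_n -> R)
  (f : 'rV[R]_n -> R) : R :=
  sup [set f v | v in [set v | N v <= 1]].

Definition gradh (R : realType) (n : nat) (h : 'rV[R]_n -> R) (x : 'rV[R]_n)
  : 'rV[R]_n -> R := fun v => 'd h x v.

Definition bregman (R : realType) (n : nat) (h : 'rV[R]_n -> R)
  (p x : 'rV[R]_n) : R :=
  h p - h x - gradh h x (p - x).

Definition is_prox (R : realType) (n : nat) (X : set 'rV[R]_n)
  (h : 'rV[R]_n -> R) (x y p : 'rV[R]_n) : Prop :=
  X p /\ forall x', X x' ->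
    pairing y (x - p) + bregman h p x <= pairing y (x - x') + bregman h x' x.

(* dom (subdifferential h): points of X where h (restricted to X, i.e. h plus
   the indicator of X) has a nonempty subdifferential *)
Definition dom_subdiff (R : realType) (n : nat) (X : set 'rV[R]_n)
  (h : 'rV[R]_n -> R) (x : 'rV[R]_n) : Prop :=
  X x /\ exists g : 'rV[R]_n,
    forall x', X x' -> h x' >= h x + pairing g (x' - x).

From HB Require Import structures.
From mathcomp Require Import all_boot all_order all_algebra.
From mathcomp Require Import all_classical all_reals all_analysis.
From mathcomp Require Import lra.
Import Order.TTheory GRing.Theory Num.Theory.
Import numFieldNormedType.Exports.
Local Open Scope classical_set_scope.
Local Open Scope ring_scope.

(* The prox point p = P_x(y) minimises a differentiable function over the
   convex set X, so it satisfies the variational inequality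
   <y, x' - p> + grad h(x)(x' - p) <= grad h(p)(x' - p) for every x' in X.
   Testing the inequality for p1 = P_x1(y) at x' = p2 and for p2 = P_x2(y) at
   x' = p1 and adding gives, with d = p1 - p2,
   (grad h(p1) - grad h(p2))(d) <= (grad h(x1) - grad h(x2))(d).
   Strong convexity bounds the left side below by K |d|^2, the definition of
   the dual norm bounds the right side above by L_h |x1 - x2| |d|.
   The dual norm is a supremum, and it is finite because in finite dimension
   every norm dominates a multiple of the sup norm. *)

Set Implicit Arguments. Unset Strict Implicit.

Section seminorm_bound.
Variables (R : realType) (n : nat).

Lemma mx_coord_le_norm (v : 'rV[R]_n) j : `|v ord0 j| <= `|v|.
Proof. by rewrite [leRHS]mx_normrE; exact: (le_bigmax _ _ (ord0, j)). Qed.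

Lemma seminorm_le_mx_norm (G : 'rV[R]_n -> R) :
  (forall x y, G (x + y) <= G x + G y) ->
  (forall (a : R) x, G (a *: x) = `|a| * G x) ->
  exists2 M, 0 <= M & forall v, G v <= M * `|v|.
Proof.
move=> GD GZ.
have G0 : G 0 = 0 by rewrite -(scale0r 0) GZ normr0 mul0r.
have G_ge0 x : 0 <= G x.
  by have := GD x (- x); rewrite subrr G0 -scaleN1r GZ normrN normr1 mul1r; lra.
exists (\sum_(j < n) G (delta_mx 0 j)) => [|v]; first exact: sumr_ge0.
rewrite {1}(row_sum_delta v).
apply: (@le_trans _ _ (\sum_j G (v 0 j *: delta_mx 0 j))).
  elim/big_ind2: _ => [|a1 a2 b1 b2 le1 le2|//]; first by rewrite G0.
  exact: le_trans (GD _ _) (lerD le1 le2).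
rewrite mulr_suml; apply: ler_sum => j _.
by rewrite GZ mulrC ler_wpM2l // mx_coord_le_norm.
Qed.

Lemma mx_unit_sphere_compact : compact [set v : 'rV[R]_n | `|v| = 1].
Proof.
apply: bounded_closed_compact.
  by exists 1; split=> [|M M1 v /= ->]; [exact: num_real | exact: ltW].
apply: (@preimage_closed _ _ (@Num.norm _ 'rV[R]_n) [set r : R | r = 1]).
  by move=> v _; exact: norm_continuous.
exact: closed_eq.
Qed.

End seminorm_bound.

Section norm.
Variables (R : realType) (n : nat) (N : 'rV[R]_n -> R).
Hypothesis N_norm : is_norm N.

Lemma is_norm0 : N 0 = 0.
Proof. by case: N_norm => _ NZ _; rewrite -(scale0r 0) NZ normr0 mul0r. Qed.

Lemma is_normN x : N (- x) = N x.
Proof. by case: N_norm => _ NZ _; rewrite -scaleN1r NZ normrN normr1 mul1r. Qed.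

Lemma is_norm_ge0 x : 0 <= N x.
Proof.
by case: N_norm => ND _ _; have := ND x (- x); rewrite subrr is_norm0 is_normN; lra.
Qed.

Lemma is_norm_ler_dist_dist x y : `|N x - N y| <= N (x - y).
Proof.
case: N_norm => ND _ _; rewrite ler_norml.
have := ND (y - x) x; have := ND (x - y) y.
by rewrite !subrK -opprB is_normN; lra.
Qed.

Lemma is_norm_continuous : continuous N.
Proof.
have [M M_ge0 NM] : exists2 M, 0 <= M & forall v, N v <= M * `|v|.
  by case: N_norm => ND NZ _; exact: seminorm_le_mx_norm.
move=> x; apply/(@cvgrPdist_lt _ _ _ (nbhs x) (nbhs_filter x)) => e e_gt0.
have eM_gt0 : 0 < e / (M + 1) by rewrite divr_gt0 // ltr_wpDl.
near=> t.
have xt_small : `|x - t| < e / (M + 1).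
  by near: t; exact: (@cvgr_dist_lt _ _ _ (nbhs x) _ id x cvg_id _ eM_gt0).
apply: le_lt_trans (is_norm_ler_dist_dist x t) _.
apply: le_lt_trans (NM _) _; apply: le_lt_trans (ler_wpM2l M_ge0 (ltW xt_small)) _.
by rewrite mulrCA gtr_pMr // ltr_pdivrMr ?mul1r; lra.
Unshelve. all: by end_near.
Qed.

Lemma is_norm_ge_mx_norm : exists2 c, 0 < c & forall v, c * `|v| <= N v.
Proof.
case: N_norm => _ NZ N_eq0.
pose S := [set v : 'rV[R]_n | `|v| = 1].
have normalize_in_S v : v != 0 -> S (`|v|^-1 *: v).
  move=> v_neq0; rewrite /S /= normrZ normrV ?unitfE ?normr_eq0 //.
  by rewrite normr_id mulVf // normr_eq0.
have [[u Su]|S_empty] := pselect (S !=set0); last first.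
  exists 1 => // v; have [->|v_neq0] := eqVneq v 0.
    by rewrite normr0 mulr0 is_norm0.
  by exfalso; apply: S_empty; exists (`|v|^-1 *: v); exact: normalize_in_S.
have [c cS c_min] : exists2 c, c \in S & forall t, t \in S -> N c <= N t.
  apply: EVT_min_rV; [by exists u | exact: mx_unit_sphere_compact |].
  exact/continuous_subspaceT/is_norm_continuous.
have Nc_gt0 : 0 < N c.
  rewrite lt_neqAle is_norm_ge0 andbT eq_sym; apply/eqP => /N_eq0 c0.
  by move: cS; rewrite inE /S /= c0 normr0 => /esym/eqP; rewrite oner_eq0.
exists (N c) => // v; have [->|v_neq0] := eqVneq v 0.
  by rewrite normr0 mulr0 is_norm0.
have := c_min _ (mem_set (normalize_in_S _ v_neq0)).
by rewrite NZ normrV ?unitfE ?normr_eq0 // normr_id ler_pdivlMl ?normr_gt0 // mulrC.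
Qed.

Variable f : 'rV[R]_n -> R.
Hypothesis fD : forall u v, f (u + v) = f u + f v.
Hypothesis fZ : forall (a : R) v, f (a *: v) = a * f v.

Let f0 : f 0 = 0. Proof. by rewrite -(scale0r 0) fZ mul0r. Qed.

Lemma has_sup_dualnorm : has_sup [set f v | v in [set v | N v <= 1]].
Proof.
have [M M_ge0 fM] : exists2 M, 0 <= M & forall v, `|f v| <= M * `|v|.
  apply: seminorm_le_mx_norm => [u v|a v]; first by rewrite fD ler_normD.
  by rewrite fZ normrM.
have [c c_gt0 cN] := is_norm_ge_mx_norm.
split; first by exists (f 0), 0 => //=; rewrite is_norm0.
exists (M / c) => _ [v /= Nv_le1 <-].
apply: le_trans (ler_norm _) _; apply: le_trans (fM v) _.
rewrite ler_pdivlMr // -mulrA ler_piMr // mulrC.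
exact: le_trans (cN v) Nv_le1.
Qed.

Lemma dualnorm_ge0 : 0 <= dualnorm N f.
Proof.
rewrite -f0; apply: sup_upper_bound has_sup_dualnorm _ _.
by exists 0; rewrite //= is_norm0.
Qed.

Lemma le_dualnorm v : f v <= dualnorm N f * N v.
Proof.
case: N_norm => _ NZ N_eq0.
have [Nv0|Nv_neq0] := eqVneq (N v) 0.
  by rewrite (N_eq0 _ Nv0) f0 is_norm0 mulr0.
have Nv_gt0 : 0 < N v by rewrite lt_neqAle eq_sym Nv_neq0 is_norm_ge0.
have : f ((N v)^-1 *: v) <= dualnorm N f.
  apply: sup_upper_bound has_sup_dualnorm _ _; exists ((N v)^-1 *: v) => //=.
  by rewrite NZ ger0_norm ?invr_ge0 ?is_norm_ge0 // mulVf.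
by rewrite fZ -ler_pdivlMl ?invr_gt0 // invrK mulrC.
Qed.

End norm.

Section directional_derivative.
Variables (R : realType) (V : normedModType R).

Lemma diff_ge_of_quotient_ge (h : V -> R) (p v : V) (A : R) :
  differentiable h p ->
  (forall t : R, 0 < t -> t <= 1 -> A <= t^-1 * (h (p + t *: v) - h p)) ->
  A <= 'd h p v.
Proof.
move=> dh A_le; rewrite -deriveE //.
have /cvg_ex[l hl] := diff_derivable (v := v) dh.
have hl_right : (fun t : R => t^-1 *: ((h \o shift p) (t *: v) - h p)) @ 0^'+ --> l.
  apply: cvg_trans hl; apply: cvg_app => B.
  rewrite /at_right/dnbhs/within !nbhs_simpl /=.
  by apply: filterS => t Bt t_gt0; apply: Bt; exact: lt0r_neq0.
rewrite /derive (cvg_lim _ hl) //; apply: (cvgr_to_ge hl_right).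
near=> t.
have t_gt0 : 0 < t by near: t; exact: nbhs_right_gt.
have t_le1 : t <= 1 by near: t; exact: nbhs_right_le.
by have := A_le t t_gt0 t_le1; rewrite /= [t *: v + p]addrC.
Unshelve. all: by end_near.
Qed.

Lemma diff_subD (h : V -> R) a b u v :
  'd h a (u + v) - 'd h b (u + v) =
  ('d h a u - 'd h b u) + ('d h a v - 'd h b v).
Proof. by rewrite !linearD addrACA. Qed.

Lemma diff_subZ (h : V -> R) a b (c : R) u :
  'd h a (c *: u) - 'd h b (c *: u) = c * ('d h a u - 'd h b u).
Proof. by rewrite !linearZ -scalerDr. Qed.

End directional_derivative.

Section prox.
Variables (R : realType) (n : nat).
Implicit Types (y u v x p : 'rV[R]_n).

Lemma pairingD y u v : pairing y (u + v) = pairing y u + pairing y v.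
Proof. by rewrite /pairing -big_split; apply: eq_bigr => i _; rewrite mxE mulrDr. Qed.

Lemma pairingZ y (a : R) v : pairing y (a *: v) = a * pairing y v.
Proof. by rewrite /pairing mulr_sumr; apply: eq_bigr => i _; rewrite mxE mulrCA. Qed.

Lemma pairingN y v : pairing y (- v) = - pairing y v.
Proof. by rewrite -scaleN1r pairingZ mulN1r. Qed.

Lemma prox_variational_ineq (X : set 'rV[R]_n) h x y p x' :
  convex_set X -> differentiable h p -> is_prox X h x y p -> X x' ->
  pairing y (x' - p) + 'd h x (x' - p) <= 'd h p (x' - p).
Proof.
move=> X_convex dh [Xp p_min] Xx'.
apply: diff_ge_of_quotient_ge => // t t_gt0 t_le1.
set v := x' - p.
have Xpt : X (p + t *: v).
  have := X_convex x' p (Itv01 (ltW t_gt0) t_le1) (mem_set Xx') (mem_set Xp).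
  by rewrite inE /conv /= /v scalerBr scalerBl scale1r addrCA addrA.
have := p_min _ Xpt; rewrite /bregman /gradh.
move: ('d h x) => Dx.
have -> : x - (p + t *: v) = (x - p) - t *: v by rewrite opprD addrA.
have -> : p + t *: v - x = (p - x) + t *: v by rewrite addrAC.
have -> : Dx (p - x + t *: v) = Dx (p - x) + t * Dx v.
  by rewrite linearD linearZ.
rewrite (pairingD y (x - p)) (pairingN y (t *: v)) pairingZ.
by rewrite ler_pdivlMl // mulrDr; lra.
Qed.

Lemma prox_pair_ineq (X : set 'rV[R]_n) h x1 x2 y p1 p2 :
  convex_set X -> differentiable h p1 -> differentiable h p2 ->
  is_prox X h x1 y p1 -> is_prox X h x2 y p2 ->
  'd h p1 (p1 - p2) - 'd h p2 (p1 - p2) <=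
  'd h x1 (p1 - p2) - 'd h x2 (p1 - p2).
Proof.
move=> X_convex dh1 dh2 prox1 prox2.
have := prox_variational_ineq X_convex dh1 prox1 prox2.1.
have := prox_variational_ineq X_convex dh2 prox2 prox1.1.
(* Generalising the differentials keeps rewrite and lra from unfolding diff
   when they compare two of them. *)
move: ('d h x1) ('d h x2) ('d h p1) ('d h p2) => D1 D2 E1 E2.
by rewrite -[p2 - p1]opprB pairingN !linearN; lra.
Qed.

End prox.

Lemma le_div_of_mul_sqr_le (R : realFieldType) (K a b : R) :
  0 < K -> 0 <= a -> 0 <= b -> K * a ^+ 2 <= b * a -> a <= b / K.
Proof.
move=> K_gt0 a_ge0 b_ge0 Kab; rewrite ler_pdivlMr //.
have [a0|a_gt0] := eqVneq a 0; first by rewrite a0 mul0r.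
have a_pos : 0 < a by rewrite lt_neqAle eq_sym a_gt0.
by rewrite -(ler_pM2r a_pos) mulrAC mulrC -expr2.
Qed.

Unset Implicit Arguments.

Theorem lemma2 (R : realType) (n : nat) (N : 'rV[R]_n -> R)
  (X : set 'rV[R]_n) (h : 'rV[R]_n -> R) (K Lh : R) :
  is_norm N ->
  compact X -> convex_set X ->
  (exists U : set 'rV[R]_n, open U /\ X `<=` U /\
     forall x, U x -> differentiable h x) ->
  0 < K ->
  (forall x x', X x -> X x' ->
     gradh h x (x - x') - gradh h x' (x - x') >= K * N (x - x') ^+ 2) ->
  (forall x x', X x -> X x' ->
     dualnorm N (fun v => gradh h x v - gradh h x' v) <= Lh * N (x - x')) ->
  forall y x1 x2 p1 p2 : 'rV[R]_n,
    dom_subdiff X h x1 -> dom_subdiff X h x2 ->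
    is_prox X h x1 y p1 -> is_prox X h x2 y p2 ->
    N (p1 - p2) <= Lh / K * N (x1 - x2).
Proof.
move=> N_norm _ X_convex [U [_ [XU h_diff]]] K_gt0 h_strong h_lip y x1 x2 p1 p2
  [Xx1 _] [Xx2 _] prox1 prox2.
have [Xp1 Xp2] := (prox1.1, prox2.1).
pose g v := gradh h x1 v - gradh h x2 v.
have gD u v : g (u + v) = g u + g v := diff_subD h x1 x2 u v.
have gZ (a : R) v : g (a *: v) = a * g v := diff_subZ h x1 x2 a v.
have lip : dualnorm N g <= Lh * N (x1 - x2) := h_lip _ _ Xx1 Xx2.
rewrite mulrAC; apply: le_div_of_mul_sqr_le => //.
- exact: is_norm_ge0.
- exact: le_trans (dualnorm_ge0 N_norm gD gZ) lip.
- apply: le_trans (h_strong _ _ Xp1 Xp2) _.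
  apply: le_trans (prox_pair_ineq X_convex (h_diff _ (XU _ Xp1))
    (h_diff _ (XU _ Xp2)) prox1 prox2) _.
  apply: le_trans (le_dualnorm N_norm gD gZ (p1 - p2)) _.
  by rewrite ler_wpM2r // is_norm_ge0.
Qed.
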